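(* Let a power network have node set $V$, initial active link set $\mathcal{E}^0$, link weights $w\in\mathbb{R}_{\ge 0}^{\mathcal{E}^0}$, link capacities $c\in\mathbb{R}_{\ge 0}^{\mathcal{E}^0}$, initial balanced supply-demand vector $p^0\in\mathcal{B}_{\mathcal{E}^0}$, and horizon $N\ge 1$. Then for every aggregated state $(\mathcal{E},P)$ reachable from $(\mathcal{E}^0,\{p^0\})$ under the aggregated dynamics, and for every $t\in\{1,\dots,N\}$, $$\mathbb{J}_t(\mathcal{E},P)=\sup_{p\in P} J_t(\mathcal{E},p).$$
   Context: Network model. The network is a finite undirected multigraph with node set $V$ and link set $\mathcal{E}^0$; each link is given an arbitrary reference orientation. For an active link set $\mathcal{E}\subseteq\mathcal{E}^0$, let $A$ be the node–link incidence matrix of $(V,\mathcal{E})$ (the column of link $i$ has $+1$ at its tail, $-1$ at its head, $0$ elsewhere), $W=\mathrm{diag}(w_i)_{i\in\mathcal{E}}$, $L(\mathcal{E})=AWA^\top$, and $L^\dagger(\mathcal{E})$ its Moore–Penrose pseudo-inverse. Let $\mathcal{B}_{\mathcal{E}}=\{u\in\mathbb{R}^V:\sum_{v\in V^{(i)}}u_v=0\text{ for every connected component }V^{(i)}\text{ of }(V,\mathcal{E})\}$. For $p\in\mathcal{B}_{\mathcal{E}}$ the link flow is $f(\mathcal{E},p)=WA^\top L^\dagger(\mathcal{E})p\in\mathbb{R}^{\mathcal{E}}$. Nodes are supply nodes $V_+$, demand nodes $V_-$ or transmission nodes; $s\in\{1,0,-1\}^V$ has $s_v=1$ on $V_+$,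 $s_v=-1$ on $V_-$, $s_v=0$ otherwise. $\mathrm{sign}(x)=1$ if $x\ge0$ and $-1$ if $x<0$. For $p\in\mathbb{R}^V$, $\mathrm{cube}(p)=\{u\in\mathbb{R}^V: 0\le \mathrm{sign}(p_v)u_v\le|p_v|\ \forall v\}$, and for a set $P$, $\mathrm{cube}(P)=\bigcup_{p\in P}\mathrm{cube}(p)$. Admissible controls: $U(\mathcal{E},p)=\mathrm{cube}(p)\cap\mathcal{B}_{\mathcal{E}}$, and for a set $P$, $U(\mathcal{E},P)=\mathcal{B}_{\mathcal{E}}\cap\mathrm{cube}(P)$. For $u\in\mathcal{B}_{\mathcal{E}}$, $\mathcal{F}_{\mathcal{E}}(\mathcal{E},u)=\{i\in\mathcal{E}:|f_i(\mathcal{E},u)|\le c_i\}$. Unaggregated values: $J_1(\mathcal{E},p)=\max\{s^\top u: u\in U(\mathcal{E},p),\ |f_i(\mathcal{E},u)|\le c_i\ \forall i\in\mathcal{E}\}$ and, for $t=2,\dots,N$, $J_t(\mathcal{E},p)=\sup_{u\in U(\mathcal{E},p)}J_{t-1}(\mathcal{F}_{\mathcal{E}}(\mathcal{E},u),u)$. Aggregation. For $\beta\in\{-1,0,1\}^{\mathcal{E}}$, $U(\mathcal{E},P,\beta)=\{u\in U(\mathcal{E},P): f_i(\mathcal{E},u)<-c_i\text{ if }\beta_i=-1;\ |f_i(\mathcal{E},u)|\le c_i\text{ if }\beta_i=0;\ f_i(\mathcal{E},u)>c_i\text{ if }\beta_i=1;\ \forall i\in\mathcal{E}\}$, and $\mathbb{U}(\mathcal{E},P)$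 is the collection of the nonempty sets $U(\mathcal{E},P,\beta)$, $\beta\in\{-1,0,1\}^{\mathcal{E}}$. For a set $U$ of vectors, $\mathcal{F}_{\mathcal{E}}(\mathcal{E},U)=\{i\in\mathcal{E}:|f_i(\mathcal{E},u)|\le c_i\ \forall u\in U\}$. Aggregated dynamics starting at $(\mathcal{E}^0,\{p^0\})$: $(\mathcal{E}^{t+1},P^{t+1})=(\mathcal{F}_{\mathcal{E}}(\mathcal{E}^t,U^t),U^t)$ with $U^t\in\mathbb{U}(\mathcal{E}^t,P^t)$. Aggregated values: $\mathbb{J}_1(\mathcal{E},P)=\max\{s^\top u: u\in U(\mathcal{E},\mathrm{cl}\,P),\ |f_i(\mathcal{E},u)|\le c_i\ \forall i\in\mathcal{E}\}$ ($\mathrm{cl}$ = closure) and, for $t\in\{1,\dots,N-1\}$, $\mathbb{J}_{t+1}(\mathcal{E},P)=\max_{U\in\mathbb{U}(\mathcal{E},P)}\mathbb{J}_t(\mathcal{F}_{\mathcal{E}}(\mathcal{E},U),U)$. *)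

From HB Require Import structures.
From mathcomp Require Import all_boot all_order all_algebra.
From mathcomp Require Import all_classical all_reals all_analysis.
Set Implicit Arguments. Unset Strict Implicit. Unset Printing Implicit Defensive.
Import Order.TTheory GRing.Theory Num.Theory.
Import numFieldNormedType.Exports.
Local Open Scope classical_set_scope.
Local Open Scope ring_scope.

Inductive tri := TNeg | TZero | TPos.

Section PowerNetwork.
Variable R : realType.
(* nodes V = 'I_n; links E^0 = 'I_m (a multigraph: link i joins tl i and hd i,
   with reference orientation tl i -> hd i). *)
Variables (n m : nat) (tl hd : 'I_m -> 'I_n).
Variables (w c : 'I_m -> R).
Variables (Vp Vm : {set 'I_n}).

Definition pinv (k : nat) (M : 'M[R]_k) : 'M[R]_k :=
  xget 0 [set X : 'M[R]_k | [/\ M *m X *m M = M, X *m M *m X = X,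
                              (M *m X)^T = M *m X & (X *m M)^T = X *m M]].

Definition incid : 'M[R]_(n, m) :=
  \matrix_(v, i) ((v == tl i)%:R - (v == hd i)%:R).

(* W restricted to the active links E (inactive links have weight 0,
   so that L(E) = A W A^T is the weighted Laplacian of (V, E)). *)
Definition Wmx (E : {set 'I_m}) : 'M[R]_m :=
  diag_mx (\row_i ((i \in E)%:R * w i)).

Definition Lap (E : {set 'I_m}) : 'M[R]_n := incid *m Wmx E *m incid^T.

Definition flow (E : {set 'I_m}) (u : 'cV[R]_n) (i : 'I_m) : R :=
  w i * (incid^T *m pinv (Lap E) *m u) i 0.

Definition adj (E : {set 'I_m}) : rel 'I_n := fun x y =>
  [exists i in E, ((tl i == x) && (hd i == y)) || ((tl i == y) && (hd i == x))].

Definition Bal (E : {set 'I_m}) : set 'cV[R]_n :=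
  [set u | forall v : 'I_n, \sum_(x | connect (adj E) v x) u x 0 = 0].

Definition svec : 'cV[R]_n := \col_v ((v \in Vp)%:R - (v \in Vm)%:R).

Definition sgn (x : R) : R := if 0 <= x then 1 else -1.

Definition cube (p : 'cV[R]_n) : set 'cV[R]_n :=
  [set u | forall v, 0 <= sgn (p v 0) * u v 0 <= `|p v 0|].

Definition cubeS (P : set 'cV[R]_n) : set 'cV[R]_n :=
  [set u | exists2 p, P p & cube p u].

Definition Up (E : {set 'I_m}) (p : 'cV[R]_n) : set 'cV[R]_n := cube p `&` Bal E.
Definition UP (E : {set 'I_m}) (P : set 'cV[R]_n) : set 'cV[R]_n := Bal E `&` cubeS P.

Definition feasible (E : {set 'I_m}) (u : 'cV[R]_n) : Prop :=
  forall i, i \in E -> `|flow E u i| <= c i.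

Definition Fu (E : {set 'I_m}) (u : 'cV[R]_n) : {set 'I_m} :=
  [set i in E | `|flow E u i| <= c i].

Definition obj (u : 'cV[R]_n) : R := (svec^T *m u) 0 0.

(* Unaggregated values: Jrec k = J_{k+1} *)
Definition J1 (E : {set 'I_m}) (p : 'cV[R]_n) : \bar R :=
  ereal_sup [set (obj u)%:E | u in [set u | Up E p u /\ feasible E u]].

Fixpoint Jrec (k : nat) (E : {set 'I_m}) (p : 'cV[R]_n) : \bar R :=
  match k with
  | 0 => J1 E p
  | k'.+1 => ereal_sup [set Jrec k' (Fu E u) u | u in Up E p]
  end.

Definition J (t : nat) := Jrec t.-1.

Definition Ubeta (E : {set 'I_m}) (P : set 'cV[R]_n) (beta : 'I_m -> tri)
  : set 'cV[R]_n :=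
  [set u | UP E P u /\ forall i, i \in E ->
     match beta i with
     | TNeg => flow E u i < - c i
     | TZero => `|flow E u i| <= c i
     | TPos => flow E u i > c i
     end].

Definition UU (E : {set 'I_m}) (P : set 'cV[R]_n) : set (set 'cV[R]_n) :=
  [set U | exists beta, U = Ubeta E P beta /\ U !=set0].

Definition FU (E : {set 'I_m}) (U : set 'cV[R]_n) : {set 'I_m} :=
  [set i in E | `[< forall u, U u -> `|flow E u i| <= c i >]].

Definition JJ1 (E : {set 'I_m}) (P : set 'cV[R]_n) : \bar R :=
  ereal_sup [set (obj u)%:E | u in [set u | UP E (closure P) u /\ feasible E u]].

Fixpoint JJrec (k : nat) (E : {set 'I_m}) (P : set 'cV[R]_n) : \bar R :=
  match k with
  | 0 => JJ1 E P
  | k'.+1 => ereal_sup [set JJrec k' (FU E U) U | U in UU E P]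
  end.

Definition JJ (t : nat) := JJrec t.-1.

Inductive reachable (p0 : 'cV[R]_n) : {set 'I_m} -> set 'cV[R]_n -> Prop :=
  | reach0 : reachable p0 [set: 'I_m]%SET [set p0]
  | reachS E P U : reachable p0 E P -> UU E P U -> reachable p0 (FU E U) U.

End PowerNetwork.

(* The identity holds at every state (E, P), reachable or not.  For t >= 2
   the aggregated recursion only regroups the controls: the nonempty cells
   Ubeta E P beta partition U(E, P), and on a cell every control leaves the
   same surviving link set F_E(E, u), namely F_E(E, cell), so a sup over
   cells of sups over their controls is the sup over all controls.  For t = 1
   the closure is harmless: if u is in cube(p) with p in cl P, then for small
   d the shrunk control (1 - d) u is in cube(q) for some q in P close to p;
   it stays balanced and feasible because flows are linear in u, and its
   objective is within d |s^T u| of that of u. *)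
From HB Require Import structures.
From mathcomp Require Import all_boot all_order all_algebra.
From mathcomp Require Import all_classical all_reals all_analysis.
From mathcomp Require Import lra.
Import Order.TTheory GRing.Theory Num.Theory.
Import numFieldNormedType.Exports.
Local Open Scope classical_set_scope.
Local Open Scope ring_scope.
Set Implicit Arguments. Unset Strict Implicit.

Lemma closure_cV_near (R : realType) (n : nat) (P : set 'cV[R]_n) p a :
  closure P p -> 0 < a -> exists2 q, P q & forall v, `|p v 0 - q v 0| < a.
Proof.
move=> clPp a_gt0.
have [q [Pq pq]] := clPp (ball p a) (nbhsx_ballx _ _ a_gt0).
by exists q => // v; case: pq => _ /(_ v 0).
Qed.

(* The relative tolerance d |p| forces q to have the sign of p and
   |q| >= (1 - d) |p|; for p = 0 the interval is {0} and any tolerance works. *)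
Lemma sgn_interval_shrink (R : realType) (p q u d : R) :
  0 < d -> d <= 1/2 -> 0 <= sgn p * u <= `|p| ->
  `|p - q| < d * (if p == 0 then 1 else `|p|) ->
  0 <= sgn q * ((1 - d) * u) <= `|q|.
Proof.
move=> d_gt0 d_le /andP[u_ge u_le].
have [p0|p_neq0] := eqVneq p 0.
  move: u_ge u_le; rewrite p0 /sgn lexx normr0 mul1r => u_ge u_le.
  have -> : u = 0 by apply/eqP; rewrite eq_le u_ge u_le.
  by rewrite !mulr0 lexx normr_ge0.
rewrite ltr_norml => /andP[pq_lo pq_hi].
move: u_ge u_le pq_lo pq_hi; rewrite /sgn.
by case: (lerP 0 p) => hp; case: (lerP 0 q) => hq;
  rewrite ?(ger0_norm hp) ?(ltr0_norm hp) ?(ger0_norm hq) ?(ltr0_norm hq)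
  => *; apply/andP; split; nra.
Qed.

Section PowerNetwork.
Variable R : realType.
Variables (n m : nat) (tl hd : 'I_m -> 'I_n).
Variables (w c : 'I_m -> R) (Vp Vm : {set 'I_n}).

Lemma closure_cube_shrink (P : set 'cV[R]_n) p u d :
  closure P p -> cube p u -> 0 < d -> d <= 1/2 ->
  exists2 q, P q & cube q ((1 - d) *: u).
Proof.
move=> clPp pu d_gt0 d_le.
pose r v := if p v 0 == 0 then 1 else `|p v 0|.
have r_gt0 v : 0 < r v by rewrite /r; case: eqP => // /eqP; rewrite normr_gt0.
pose a := d * \big[Order.min/1]_v r v.
have a_gt0 : 0 < a by rewrite mulr_gt0 // lt_bigmin // => v _.
have [q Pq pq] := closure_cV_near clPp a_gt0.
exists q => // v; rewrite mxE; apply: (sgn_interval_shrink d_gt0 d_le (pu v)).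
apply: lt_le_trans (pq v) _.
by apply: ler_wpM2l; [exact: ltW | exact: bigmin_le].
Qed.

Lemma obj_scale (l : R) u : obj Vp Vm (l *: u) = l * obj Vp Vm u.
Proof. by rewrite /obj -scalemxAr mxE. Qed.

Lemma Bal_scale E (l : R) u : Bal tl hd E u -> Bal tl hd E (l *: u).
Proof.
move=> Bu v; under eq_bigr do rewrite mxE.
by rewrite -mulr_sumr Bu mulr0.
Qed.

Lemma flow_scale E (l : R) u i :
  flow tl hd w E (l *: u) i = l * flow tl hd w E u i.
Proof. by rewrite /flow -scalemxAr mxE mulrCA. Qed.

Lemma feasible_scale E (l : R) u :
  0 <= l <= 1 -> feasible tl hd w c E u -> feasible tl hd w c E (l *: u).
Proof.
move=> /andP[l_ge0 l_le1] fu i iE.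
rewrite flow_scale normrM (ger0_norm l_ge0).
by apply: le_trans (fu i iE); rewrite ler_piMl.
Qed.

Lemma FU_Ubeta E P beta u : Ubeta tl hd w c E P beta u ->
  FU tl hd w c E (Ubeta tl hd w c E P beta) = Fu tl hd w c E u.
Proof.
move=> Uu; have [_ u_beta] := Uu.
apply/setP=> i; rewrite !inE; case iE: (i \in E) => //=.
apply/asboolP/idP => [/(_ u Uu)//|].
rewrite ler_norml => /andP[u_lo u_hi] u' [_ u'_beta].
move: (u_beta i iE) (u'_beta i iE); case: (beta i) => // h _.
- by have := lt_le_trans h u_lo; rewrite ltxx.
- by have := le_lt_trans u_hi h; rewrite ltxx.
Qed.

Definition flow_status E u (i : 'I_m) : tri :=
  if flow tl hd w E u i < - c i then TNeg
  else if c i < flow tl hd w E u i then TPos else TZero.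

Lemma Ubeta_flow_status E P u :
  UP tl hd E P u -> Ubeta tl hd w c E P (flow_status E u) u.
Proof.
move=> Uu; split=> // i _; rewrite /flow_status.
case: ifP => // lo; case: ifP => // hi.
by rewrite ler_norml !leNgt lo hi.
Qed.

Lemma JJ1_sup E P :
  JJ1 tl hd w c Vp Vm E P = ereal_sup [set J1 tl hd w c Vp Vm E p | p in P].
Proof.
apply/eqP; rewrite eq_le; apply/andP; split; last first.
  apply: ge_ereal_sup => _ [p Pp <-].
  apply: ereal_sup_le => _ [u [[pu Bu] fu] <-]; exists u => //.
  by split=> //; split=> //; exists p => //; apply: subset_closure.
apply: ge_ereal_sup => _ [u [[Bu [p clPp pu]] fu] <-].
apply/lee_subgt0Pr => e e_gt0.
set o := obj Vp Vm u.
have o1_gt0 : 0 < `|o| + 1 by rewrite ltr_wpDl.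
pose d := Order.min (1/2 : R) (e / (`|o| + 1)).
have d_gt0 : 0 < d by rewrite lt_min; apply/andP; split; [lra | exact: divr_gt0].
have d_le : d <= 1/2 by rewrite ge_min lexx.
have d_small : d * `|o| <= e.
  have : d <= e / (`|o| + 1) by rewrite ge_min lexx orbT.
  rewrite ler_pdivlMr // mulrDr mulr1 => /(le_trans _); apply.
  by rewrite lerDl ltW.
have [q Pq qu] := closure_cube_shrink clPp pu d_gt0 d_le.
apply: (@le_trans _ _ (J1 tl hd w c Vp Vm E q)); last first.
  by apply: ereal_sup_ubound; exists q.
apply: (@le_trans _ _ (obj Vp Vm ((1 - d) *: u))%:E); last first.
  apply: ereal_sup_ubound; exists ((1 - d) *: u) => //.
  split; [split=> //; exact: Bal_scale|].
  by apply: feasible_scale => //; apply/andP; split; lra.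
rewrite obj_scale -EFinB lee_fin mulrBl mul1r lerD2l lerN2.
exact: le_trans (ler_wpM2l (ltW d_gt0) (ler_norm o)) d_small.
Qed.

Lemma JJrec_succ_sup k :
  (forall E P, JJrec tl hd w c Vp Vm k E P =
     ereal_sup [set Jrec tl hd w c Vp Vm k E p | p in P]) ->
  forall E P, JJrec tl hd w c Vp Vm k.+1 E P =
     ereal_sup [set Jrec tl hd w c Vp Vm k.+1 E p | p in P].
Proof.
move=> IH E P /=; apply/eqP; rewrite eq_le; apply/andP; split.
  apply: ge_ereal_sup => _ [U [beta [-> _]] <-].
  rewrite IH; apply: ge_ereal_sup => _ [u Uu <-].
  rewrite (FU_Ubeta Uu); have [[Bu [p Pp pu]] _] := Uu.
  apply: (@le_trans _ _ (Jrec tl hd w c Vp Vm k.+1 E p)).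
    by apply: ereal_sup_ubound; exists u.
  by apply: ereal_sup_ubound; exists p.
apply: ge_ereal_sup => _ [p Pp <-]; apply: ge_ereal_sup => _ [u [pu Bu] <-].
set U := Ubeta tl hd w c E P (flow_status E u).
have Uu : U u by apply: Ubeta_flow_status; split=> //; exists p.
apply: (@le_trans _ _ (JJrec tl hd w c Vp Vm k (FU tl hd w c E U) U)).
  by rewrite IH (FU_Ubeta Uu); apply: ereal_sup_ubound; exists u.
apply: ereal_sup_ubound; exists U => //.
by exists (flow_status E u); split=> //; exists u.
Qed.

Lemma JJrec_sup k E P :
  JJrec tl hd w c Vp Vm k E P =
    ereal_sup [set Jrec tl hd w c Vp Vm k E p | p in P].
Proof.
elim: k E P => [|k IH]; first exact: JJ1_sup.
exact: JJrec_succ_sup.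
Qed.

End PowerNetwork.

Theorem theorem1 (R : realType) (n m : nat) (tl hd : 'I_m -> 'I_n)
  (w c : 'I_m -> R) (Vp Vm : {set 'I_n}) (p0 : 'cV[R]_n) (N : nat) :
  [disjoint Vp & Vm]%B ->
  (forall i, 0 <= w i) -> (forall i, 0 <= c i) ->
  Bal tl hd [set: 'I_m]%SET p0 ->
  (1 <= N)%N ->
  forall (E : {set 'I_m}) (P : set 'cV[R]_n),
    reachable tl hd w c p0 E P ->
    forall t : nat, (1 <= t <= N)%N ->
      JJ tl hd w c Vp Vm t E P
      = ereal_sup [set J tl hd w c Vp Vm t E p | p in P].
Proof.
move=> _ _ _ _ _ E P _ t _.
exact: JJrec_sup.
Qed.
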